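(* Let $X$ be a real normed space, $f:X\to\mathbb R\cup\{+\infty\}$ proper, $\bar x\in(\partial f)^{-1}(0)$, and $p,q\in(1,\infty)$ with $p^{-1}+q^{-1}=1$. (i) Suppose there exist $\beta\in(0,+\infty]$, $\kappa\in(0,+\infty)$ and a dense subset $\mathcal W$ of $\mathbb B_*(0,\beta)$ such that for every $\xi\in\mathcal W$ there is $x\in X$ with $\xi\in\partial f(x)$ and $\|x-\bar x\|\le\kappa\|\xi\|^{q/p}$. Then for every $\delta\in(0,+\infty)$, $$f(x)\ge f(\bar x)+\frac12\min\Big\{\frac{\beta}{\delta^{p/q}},\frac{1}{(2\kappa)^{p/q}}\Big\}\|x-\bar x\|^p\quad\text{for all }x\in\mathbb B(\bar x,\delta).$$ (ii) Suppose $\partial f$ is strongly $\frac qp$-subregular at $\bar x$ with parameters $\alpha\in(0,+\infty]$ and $\kappa\in(0,+\infty)$. Then $$f(x)\ge f(\bar x)+\frac{1}{2(2\kappa)^{p/q}}\|x-\bar x\|^p\quad\text{for all }x\in\bar x+2\kappa\,J_p^{-1}\Big(\overline{\partial f(\mathbb B(\bar x,\alpha))}\Big).$$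
   Context: $\partial f(x):=\{\xi\in X^*: x\text{ is a global minimizer of } f-\langle\xi,\cdot\rangle\}$ (Fenchel–Moreau subdifferential, $f$ possibly nonconvex); $(\partial f)^{-1}(0)=\{x:0\in\partial f(x)\}$; $\partial f(A)=\bigcup_{x\in A}\partial f(x)$. $\mathbb B(x,r)$ and $\mathbb B_*(\xi,r)$ are closed balls in $X$ and $X^*$, with $\mathbb B(x,+\infty)=X$. Duality mapping: $J_p(x):=\{\xi\in X^*:\langle\xi,x\rangle=\|\xi\|\|x\|,\ \|\xi\|=\|x\|^{p-1}\}$, and $J_p^{-1}(A):=\{x: J_p(x)\cap A\ne\emptyset\}$. A set-valued map $\mathcal F:X\rightrightarrows Y$ is strongly $\lambda$-subregular at $\bar x\in\mathcal F^{-1}(0)$ with parameters $\alpha\in(0,+\infty]$, $\kappa\in(0,+\infty)$ if $\|x-\bar x\|\le\kappa\, d(0,\mathcal F(x))^\lambda$ for all $x\in\mathbb B(\bar x,\alpha)$, where $d(0,\mathcal F(x))=\inf\{\|y\|:y\in\mathcal F(x)\}$ ($=+\infty$ if $\mathcal F(x)=\emptyset$). *)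

From HB Require Import structures.
From mathcomp Require Import all_boot all_order all_algebra.
From mathcomp Require Import all_classical all_reals all_analysis.
Set Implicit Arguments. Unset Strict Implicit. Unset Printing Implicit Defensive.
Import Order.TTheory GRing.Theory Num.Theory.
Import numFieldNormedType.Exports.
Local Open Scope classical_set_scope.
Local Open Scope ring_scope.

Section Defs.
Variables (R : realType) (X : normedModType R).

Definition dual_elt (xi : X -> R) : Prop :=
  (forall (a : R) (x y : X), xi (a *: x + y) = a * xi x + xi y) /\ continuous xi.

Definition dnorm (xi : X -> R) : R := sup [set Num.norm (xi x) | x in [set x : X | `|x| <= 1]].

(* Closed ball B_*(0, beta) in X^*, beta in (0,+oo] (beta = +oo gives all of X^* ). *)
Definition dball0 (beta : \bar R) : set (X -> R) :=
  [set xi | dual_elt xi /\ ((dnorm xi)%:E <= beta)%E].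

Definition dclosure (A : set (X -> R)) : set (X -> R) :=
  [set xi | dual_elt xi /\
     forall eps : R, 0 < eps -> exists2 eta, A eta & dnorm (fun x => xi x - eta x) < eps].

Definition dense_in (W B : set (X -> R)) : Prop := W `<=` B /\ B `<=` dclosure W.

Definition proper_fun (f : X -> \bar R) : Prop :=
  (forall x, f x != -oo%E) /\ exists x, f x != +oo%E.

Definition subdiff (f : X -> \bar R) (x : X) : set (X -> R) :=
  [set xi | dual_elt xi /\ forall y, (f x - (xi x)%:E <= f y - (xi y)%:E)%E].

Definition cball (x : X) (r : \bar R) : set X := [set y | ((`|y - x|)%:E <= r)%E].

Definition subdiff_set (f : X -> \bar R) (A : set X) : set (X -> R) :=
  [set xi | exists2 x, A x & subdiff f x xi].

(* d(0, F(x)) = inf of dual norms, +oo if F(x) is empty. *)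
Definition dist0_subdiff (f : X -> \bar R) (x : X) : \bar R :=
  ereal_inf [set (dnorm xi)%:E | xi in subdiff f x].

Definition subdiff_strongly_subregular (f : X -> \bar R) (xbar : X)
    (lam : R) (alpha : \bar R) (kappa : R) : Prop :=
  subdiff f xbar (fun _ => 0) /\
  forall x, cball xbar alpha x ->
    ((`|x - xbar|)%:E <= kappa%:E * (dist0_subdiff f x) `^ lam)%E.

Definition dualmap (p : R) (x : X) : set (X -> R) :=
  [set xi | dual_elt xi /\ xi x = dnorm xi * `|x| /\ dnorm xi = `|x| `^ (p - 1)].

Definition dualmap_inv (p : R) (A : set (X -> R)) : set X :=
  [set x | exists2 xi, dualmap p x xi & A xi].

End Defs.

(* If [eta] is a subgradient of [f] at [z] and [xbar] minimizes [f], then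
   [f y >= f xbar + eta (y - xbar) - |eta| |z - xbar|].  When moreover
   [|z - xbar| <= kappa |eta|^(q/p)], this passes to norm limits: every [xi]
   in the closure of such subgradients satisfies
   [f y >= f xbar + xi (y - xbar) - kappa |xi|^(1 + q/p)].
   For (i), take [xi] to be [t] times a Hahn-Banach norming functional of
   [x - xbar], with [t] as large as [beta] and [kappa t^(q/p) <= |x - xbar| / 2]
   allow.  For (ii), strong subregularity puts every subgradient taken near
   [xbar] into the class above; for [xi] in [J_p u] and [y = xbar + 2 kappa u],
   conjugacy of [p] and [q] turns each term into a multiple of [|u|^p]. *)

From HB Require Import structures.
From mathcomp Require Import all_boot all_order all_algebra.
From mathcomp Require Import all_classical all_reals all_analysis.
From mathcomp Require Import ring lra.
Set Implicit Arguments. Unset Strict Implicit. Unset Printing Implicit Defensive.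
Import Order.TTheory GRing.Theory Num.Theory.
Import numFieldNormedType.Exports.
Local Open Scope classical_set_scope.
Local Open Scope ring_scope.

Section DualElements.
Variables (R : realType) (X : normedModType R).
Implicit Types xi eta : X -> R.

Lemma dual_elt0 xi : dual_elt xi -> xi 0 = 0.
Proof.
by case=> lin _; have := lin (-1) 0 0; rewrite scaler0 addr0 mulN1r addNr.
Qed.

Lemma dual_eltD xi x y : dual_elt xi -> xi (x + y) = xi x + xi y.
Proof. by case=> lin _; rewrite -[x in LHS]scale1r lin mul1r. Qed.

Lemma dual_eltZ xi a x : dual_elt xi -> xi (a *: x) = a * xi x.
Proof. by move=> h; rewrite -[_ *: x]addr0 (proj1 h) dual_elt0 // addr0. Qed.

Lemma dual_eltB xi x y : dual_elt xi -> xi (x - y) = xi x - xi y.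
Proof. by move=> h; rewrite dual_eltD // -scaleN1r dual_eltZ // mulN1r. Qed.

Lemma dual_elt_sub xi eta :
  dual_elt xi -> dual_elt eta -> dual_elt (fun x => xi x - eta x).
Proof.
move=> [xil xic] [etal etac]; split; first by move=> a x y; rewrite xil etal; ring.
by move=> x; apply: cvgB; [exact: xic | exact: etac].
Qed.

Lemma dual_elt_scale xi t : dual_elt xi -> dual_elt (fun x => t * xi x).
Proof.
move=> [xil xic]; split; first by move=> a x y; rewrite xil; ring.
by move=> x; apply: cvgM; [exact: cvg_cst | exact: xic].
Qed.

Lemma dual_elt_bounded xi : dual_elt xi ->
  exists2 M, 0 < M & forall x, `|xi x| <= M * `|x|.
Proof.
move=> h; have [_ /(_ 0) xi_cont] := h.
have := @cvgr_dist_lt _ _ _ _ _ xi _ xi_cont 1 ltr01.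
move=> /(_ _) /nbhs_norm0P[/= e e0 He].
exists (2 / e); first by rewrite divr_gt0.
move=> x; have [->|x0] := eqVneq x 0; first by rewrite dual_elt0 // !normr0 mulr0.
have nx : 0 < `|x| by rewrite normr_gt0.
have k0 : 0 < e / 2 / `|x| by rewrite !divr_gt0.
have := He ((e / 2 / `|x|) *: x).
rewrite /= normrZ gtr0_norm // divfK ?gt_eqF // gtr_pMr ?invf_lt1 ?ltr1n // => /(_ isT).
rewrite dual_elt0 // sub0r normrN dual_eltZ // normrM gtr0_norm // => /ltW lt1.
rewrite -(ler_pM2l k0) (le_trans lt1) // le_eqVlt; apply/orP; left; apply/eqP.
by field; rewrite !gt_eqF.
Qed.

Lemma has_sup_dnorm xi : dual_elt xi ->
  has_sup [set Num.norm (xi x) | x in [set x : X | `|x| <= 1]].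
Proof.
move=> h; have [M M0 HM] := dual_elt_bounded h.
split; first by exists `|xi 0|, 0 => //=; rewrite normr0.
exists M => _ [x /= x1 <-]; apply: le_trans (HM x) _.
by rewrite ler_piMr // ltW.
Qed.

Lemma dnorm_ge0 xi : dual_elt xi -> 0 <= dnorm xi.
Proof.
move=> h; apply: le_trans (sup_upper_bound (has_sup_dnorm h) _).
  exact: normr_ge0 (xi 0).
by exists 0 => //=; rewrite normr0.
Qed.

Lemma dual_normr_le xi x : dual_elt xi -> `|xi x| <= dnorm xi * `|x|.
Proof.
move=> h; have [->|x0] := eqVneq x 0; first by rewrite dual_elt0 // !normr0 mulr0.
have nx : 0 < `|x| by rewrite normr_gt0.
have : `|xi (`|x|^-1 *: x)| <= dnorm xi.
  apply: (sup_upper_bound (has_sup_dnorm h)); exists (`|x|^-1 *: x) => //=.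
  by rewrite normrZ normfV normr_id mulVf ?gt_eqF.
by rewrite dual_eltZ // normrM normfV normr_id mulrC ler_pdivrMr.
Qed.

Lemma dnorm_le xi M : dual_elt xi ->
  (forall x, `|x| <= 1 -> `|xi x| <= M) -> dnorm xi <= M.
Proof.
move=> h HM; apply: ge_sup; first by exists `|xi 0|, 0 => //=; rewrite normr0.
by move=> _ [x /= x1 <-]; exact: HM.
Qed.

Lemma dnorm_sub_le xi eta : dual_elt xi -> dual_elt eta ->
  dnorm eta <= dnorm xi + dnorm (fun x => xi x - eta x).
Proof.
move=> hxi heta; apply: dnorm_le => // x x1.
have hdiff := dual_elt_sub hxi heta.
have := ler_normB (xi x) (xi x - eta x); rewrite opprB addrC subrK => /le_trans; apply.
apply: le_trans (lerD (dual_normr_le x hxi) (dual_normr_le x hdiff)) _.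
by rewrite -mulrDl ler_piMr // addr_ge0 // dnorm_ge0.
Qed.

Lemma dclosure_subset (A B : set (X -> R)) : A `<=` B -> dclosure A `<=` dclosure B.
Proof.
move=> AB xi [dxi approx]; split => // eps eps0.
by have [eta /AB Beta close] := approx eps eps0; exists eta.
Qed.

End DualElements.

Section Limits.
Variable R : realType.

Lemma powR_addr_cvg (d s : R) : 0 <= d -> 0 < s ->
  (d + e) `^ s @[e --> 0^'+] --> d `^ s.
Proof.
rewrite le_eqVlt => /orP[/eqP <- s0|d0 _].
  rewrite powR0 ?gt_eqF //.
  by under eq_fun do rewrite add0r; exact: powR_cvg0.
have shift : (d + e) @[e --> (0:R)^'+] --> d.
  apply: cvg_at_right_filter; rewrite -[in X in _ --> X](addr0 d).
  exact: (cvgD (cvg_cst _) cvg_id).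
have cont : {for d, continuous (fun a : R => a `^ s)}.
  apply: differentiable_continuous.
  by apply/derivable1_diffP; apply: derivable_powR; rewrite in_itv /= d0.
exact: (cvg_comp (fun e => d + e) (fun a : R => a `^ s) shift cont).
Qed.

Lemma le_right_limit (g : R -> R) (c : R) (F : \bar R) :
  g e @[e --> 0^'+] --> c -> (forall e, 0 < e -> ((g e)%:E <= F)%E) ->
  (c%:E <= F)%E.
Proof.
move=> gc gF; case: F gF => [a| |] gF; last 2 first.
- exact: leey.
- by have := gF 1 ltr01; rewrite leeNy_eq.
rewrite lee_fin; apply/ler_addgt0Pr => eps eps0.
have [e [e0 ge]] : exists e, 0 < e /\ c - eps < g e.
  apply: (@filter_ex _ (0^'+)); near=> e; split; first by near: e; exact: nbhs_right_gt.
  by near: e; apply: (cvgr_gt _ gc); rewrite ltrBlDr ltrDl.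
have := gF e e0; rewrite lee_fin; lra.
Unshelve. all: by end_near. Qed.
End Limits.

Section NormingFunctional.
Variables (R : realType) (X : normedModType R).

Definition subnorm_graph (G : set (X * R)) : Prop :=
  [/\ forall a x r y s, G (x, r) -> G (y, s) -> G (a *: x + y, a * r + s),
      forall x r s, G (x, r) -> G (x, s) -> r = s &
      forall x r, G (x, r) -> r <= `|x|].

Lemma subnorm_graph_bigcup (F : set (set (X * R))) :
  F `<=` subnorm_graph -> total_on F subset -> subnorm_graph (\bigcup_(G in F) G).
Proof.
move=> FP tot; split.
- move=> a x r y s [G1 FG1 H1] [G2 FG2 H2].
  have [S12|S21] := tot _ _ FG1 FG2.
  + by have [cl _ _] := FP _ FG2; exists G2 => //; apply: cl => //; exact: S12.
  + by have [cl _ _] := FP _ FG1; exists G1 => //; apply: cl => //; exact: S21.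
- move=> x r s [G1 FG1 H1] [G2 FG2 H2].
  have [S12|S21] := tot _ _ FG1 FG2.
  + by have [_ fn _] := FP _ FG2; exact: fn (S12 _ H1) H2.
  + by have [_ fn _] := FP _ FG1; exact: fn H1 (S21 _ H2).
- by move=> x r [G FG H]; have [_ _ dm] := FP _ FG; exact: dm H.
Qed.

Lemma subnorm_graph_line (v : X) : v != 0 ->
  subnorm_graph [set (t *: v, t * `|v|) | t in setT].
Proof.
move=> v0; split.
- move=> a x r y s [t _ [<- <-]] [t' _ [<- <-]]; exists (a * t + t') => //.
  by rewrite scalerDl scalerA; congr pair; ring.
- move=> x r s [t _ [<- <-]] [t' _ [E <-]].
  have : (t - t') *: v = 0 by rewrite scalerBl E subrr.
  by move/eqP; rewrite scaler_eq0 (negbTE v0) orbF subr_eq0 => /eqP ->.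
- move=> x r [t _ [<- <-]]; rewrite normrZ ler_pM2r ?normr_gt0 //; exact: ler_norm.
Qed.

Section Extension.
Variables (G : set (X * R)) (x0 : X).
Hypotheses (subG : subnorm_graph G) (G0 : G (0, 0)) (x0_notin : forall r, ~ G (x0, r)).

Lemma subnorm_graph_scale a x r : G (x, r) -> G (a *: x, a * r).
Proof. by case: subG => cl _ _ Gx; have := cl a _ _ _ _ Gx G0; rewrite !addr0. Qed.

Lemma subnorm_graph_sub x r y s : G (x, r) -> G (y, s) -> G (y - x, s - r).
Proof.
case: subG => cl _ _ Gx Gy; have := cl (-1) _ _ _ _ Gx Gy.
by rewrite scaleN1r mulN1r !(addrC (- _)).
Qed.

(* Any [c] in this gap makes [x + t x0 |-> r + t c] dominated by the norm. *)
Lemma subnorm_graph_gap : exists c,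
  (forall y s, G (y, s) -> s - `|y - x0| <= c) /\
  (forall x r, G (x, r) -> c <= `|x + x0| - r).
Proof.
have [cl _ dm] := subG.
have key x r y s : G (x, r) -> G (y, s) -> s - `|y - x0| <= `|x + x0| - r.
  move=> Gx Gy; have := dm _ _ (cl 1 _ _ _ _ Gx Gy); rewrite scale1r mul1r.
  have : `|x + y| <= `|x + x0| + `|y - x0|.
    by have := ler_normD (x + x0) (y - x0); rewrite addrACA subrr addr0.
  lra.
pose L := [set w | exists y s, G (y, s) /\ w = s - `|y - x0|].
have L0 : L !=set0 by exists (0 - `|0 - x0|), 0, 0.
exists (sup L); split.
  move=> y s Gy; apply: sup_upper_bound; last by exists y, s.
  by split => //; exists (`|0 + x0| - 0) => _ [y' [s' [Gy' ->]]]; exact: key G0 Gy'.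
move=> x r Gx; apply: ge_sup => // _ [y [s [Gy ->]]]; exact: key Gx Gy.
Qed.

Variable c : R.
Hypotheses (c_ub : forall y s, G (y, s) -> s - `|y - x0| <= c)
           (c_lb : forall x r, G (x, r) -> c <= `|x + x0| - r).

Definition graph_extension : set (X * R) :=
  [set z | exists x r t, G (x, r) /\ z = (x + t *: x0, r + t * c)].

Lemma graph_extension_functional x r s :
  graph_extension (x, r) -> graph_extension (x, s) -> r = s.
Proof.
have [_ fn _] := subG.
move=> [x1 [r1 [t1 [G1 [-> ->]]]]] [x2 [r2 [t2 [G2 [E2 ->]]]]].
have t12 : t1 = t2.
  apply: contrapT => /eqP; rewrite -subr_eq0 => t12.
  apply: (@x0_notin ((t1 - t2)^-1 * (r2 - r1))).
  suff <- : (t1 - t2)^-1 *: (x2 - x1) = x0 by apply/subnorm_graph_scale/subnorm_graph_sub.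
  by rewrite (_ : x2 - x1 = (t1 - t2) *: x0) ?scalerA ?mulVf ?scale1r // scalerBl;
     apply/eqP; rewrite subr_eq addrAC -subr_eq opprK addrC -E2 addrC.
subst t2; have E : x1 = x2 by apply: (addIr (t1 *: x0)).
by subst x2; rewrite (fn _ _ _ G1 G2).
Qed.

Lemma graph_extension_dominated x r : graph_extension (x, r) -> r <= `|x|.
Proof.
have [_ _ dm] := subG.
move=> [x1 [r1 [t [G1 [-> ->]]]]].
have [->|t0] := eqVneq t 0; first by rewrite scale0r mul0r !addr0; exact: dm G1.
have [tp|tn] := ltrP 0 t.
  have E : x1 + t *: x0 = t *: (t^-1 *: x1 + x0).
    by rewrite scalerDr scalerA mulfV ?gt_eqF // scale1r.
  have := c_lb (subnorm_graph_scale t^-1 G1).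
  rewrite E normrZ gtr0_norm // -(ler_pM2l tp) mulrBr mulrA mulfV ?gt_eqF // mul1r.
  lra.
have up : 0 < - t by rewrite oppr_gt0 lt_neqAle t0.
have E : x1 + t *: x0 = (- t) *: ((- t)^-1 *: x1 - x0).
  by rewrite scalerDr scalerA mulfV ?gt_eqF // scale1r scalerN scaleNr opprK.
have := c_ub (subnorm_graph_scale (- t)^-1 G1).
rewrite E normrZ gtr0_norm // -(ler_pM2l up) mulrBr mulrA mulfV ?gt_eqF // mul1r.
lra.
Qed.

Lemma subnorm_graph_extension : subnorm_graph graph_extension.
Proof.
have [cl _ _] := subG; split.
- move=> a x r y s [x1 [r1 [t1 [G1 [-> ->]]]]] [x2 [r2 [t2 [G2 [-> ->]]]]].
  exists (a *: x1 + x2), (a * r1 + r2), (a * t1 + t2); split; first exact: cl.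
  congr pair; last by ring.
  by rewrite scalerDr scalerA addrACA -scalerDl.
- exact: graph_extension_functional.
- exact: graph_extension_dominated.
Qed.

Lemma graph_extension_proper : G `<` graph_extension.
Proof.
split; first by move=> [x r] Gx; exists x, r, 0; rewrite scale0r mul0r !addr0.
move=> /(_ (x0, c)) sub; apply: (@x0_notin c); apply: sub.
by exists 0, 0, 1; rewrite scale1r mul1r !add0r.
Qed.

End Extension.

Lemma total_subnorm_graph_dual (G : set (X * R)) : subnorm_graph G ->
  (forall x, exists r, G (x, r)) ->
  exists g, [/\ dual_elt g, forall x, G (x, g x) & forall x, `|g x| <= `|x|].
Proof.
move=> [cl fn dm] /choice[g Gg].
have glin a x y : g (a *: x + y) = a * g x + g y.
  exact: fn _ _ _ (Gg _) (cl _ _ _ _ _ (Gg x) (Gg y)).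
have g0 : g 0 = 0 by have := glin (-1) 0 0; rewrite scaler0 addr0 mulN1r addNr.
have gN x : g (- x) = - g x.
  by have := glin (-1) x 0; rewrite scaleN1r !addr0 g0 addr0 mulN1r.
have gle x : `|g x| <= `|x|.
  by rewrite ler_norml dm // andbT lerNl -gN -normrN dm.
exists g; split => //; split => // x.
apply/cvgrPdist_lt => e e0; apply/nbhs_normP; exists e => //= y /= hy.
have -> : g x - g y = g (x - y) by rewrite -[x]scale1r glin mul1r gN scale1r.
exact: le_lt_trans (gle _) hy.
Qed.

Lemma exists_norming_functional (v : X) : v != 0 ->
  exists xi, [/\ dual_elt xi, xi v = `|v| & forall x, `|xi x| <= `|x|].
Proof.
(* The anchoring condition is conditional because [Zorn_bigcup] also has to
   accept the union of the empty chain. *)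
move=> v0; pose anchored G := subnorm_graph G /\ (G !=set0 -> G (v, `|v|)).
have [A [[subA ancA] Amax]] : exists A, anchored A /\ forall B, A `<` B -> ~ anchored B.
  apply: Zorn_bigcup => F FP tot; split.
    by apply: subnorm_graph_bigcup => // G /FP[].
  by move=> [z [G FG Gz]]; exists G => //; apply: (FP _ FG).2; exists z.
have Av : A (v, `|v|).
  apply: contrapT => nAv; apply: (Amax [set (t *: v, t * `|v|) | t in setT]).
    split; first by move=> z Az; exfalso; apply/nAv/ancA; exists z.
    by move=> /(_ (v, `|v|)) sub; apply/nAv/sub; exists 1; rewrite ?scale1r ?mul1r.
  by split; [exact: subnorm_graph_line | move=> _; exists 1; rewrite ?scale1r ?mul1r].
have A0 : A (0, 0).
  by have [cl _ _] := subA; have := cl (-1) _ _ _ _ Av Av; rewrite scaleN1r mulN1r !addNr.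
have total x0 : exists r, A (x0, r).
  apply: contrapT => nA; have x0_notin r : ~ A (x0, r) by move=> Ar; apply: nA; exists r.
  have [c [c_ub c_lb]] := subnorm_graph_gap x0 subA A0.
  apply: (Amax (graph_extension A x0 c)); first exact: graph_extension_proper.
  split; first exact: subnorm_graph_extension.
  by move=> _; exists v, `|v|, 0; rewrite scale0r mul0r !addr0.
have [xi [dxi Axi xile]] := total_subnorm_graph_dual subA total.
by exists xi; split => //; have [_ fn _] := subA; exact: fn _ _ _ (Axi v) Av.
Qed.

End NormingFunctional.

Section Subgradients.
Variables (R : realType) (X : normedModType R).
Implicit Types (f : X -> \bar R) (xi eta : X -> R).

Lemma minimizer_finite f xbar : proper_fun f -> subdiff f xbar (fun _ => 0) ->
  exists b, f xbar = b%:E.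
Proof.
move=> [fNy [y fy]] [_ /(_ y)]; rewrite /= !sube0.
case: (f xbar) (fNy xbar) => [b _ _| _ |//]; first by exists b.
by rewrite leye_eq => /eqP fyy; move: fy; rewrite fyy.
Qed.

Lemma subgradient_lower_bound f xbar b z eta y :
  subdiff f xbar (fun _ => 0) -> f xbar = b%:E -> subdiff f z eta ->
  ((b + eta (y - xbar) - dnorm eta * `|z - xbar|)%:E <= f y)%E.
Proof.
move=> [_ /(_ z)] + fb [deta /(_ y)]; rewrite fb /= oppr0 adde0.
have etaz : eta z - eta xbar <= dnorm eta * `|z - xbar|.
  by rewrite -dual_eltB //; exact: le_trans (ler_norm _) (dual_normr_le _ deta).
rewrite dual_eltB //.
case: (f z) => [c| |] //; case: (f y) => [a| |] //; rewrite ?leey // !lee_fin.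
lra.
Qed.

End Subgradients.

Section ApproximateSubgradients.
Variables (R : realType) (X : normedModType R).
Variables (f : X -> \bar R) (xbar : X) (b kappa s : R).
Hypotheses (fxbar_min : subdiff f xbar (fun _ => 0)) (fxbar : f xbar = b%:E).
Hypotheses (kappa_ge0 : 0 <= kappa) (s_gt0 : 0 < s).

Definition localized_subgradients : set (X -> R) :=
  [set eta | exists z, subdiff f z eta /\ `|z - xbar| <= kappa * dnorm eta `^ s].

(* An [e]-approximation of [xi] yields the bound [g e] below, in which [dnorm xi]
   is replaced by [dnorm xi + e]; then let [e] tend to [0]. *)
Lemma dclosure_localized_lower_bound xi y :
  dclosure localized_subgradients xi ->
  ((b + xi (y - xbar) - kappa * (dnorm xi * dnorm xi `^ s))%:E <= f y)%E.
Proof.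
move=> [dxi approx]; set d := dnorm xi; set n := `|y - xbar|.
have d0 : 0 <= d := dnorm_ge0 dxi.
pose g e := b + xi (y - xbar) - e * n - kappa * ((d + e) * (d + e) `^ s).
apply: (@le_right_limit _ g).
  have de : d + e @[e --> 0^'+] --> d.
    rewrite -[X in _ --> X]addr0; apply: cvgD; first exact: cvg_cst.
    exact: cvg_at_right_filter.
  have e0 : e @[e --> (0 : R)^'+] --> 0 by exact: cvg_at_right_filter.
  have lim : g e @[e --> 0^'+] --> b + xi (y - xbar) - 0 * n - kappa * (d * d `^ s).
    apply: cvgB.
      by apply: cvgB; [exact: cvg_cst | apply: cvgM; [exact: e0 | exact: cvg_cst]].
    apply: cvgM; first exact: cvg_cst.
    by apply: cvgM; [exact: de | exact: powR_addr_cvg].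
  by rewrite mul0r subr0 in lim.
move=> e e0; have [eta [z [subz zclose]] close] := approx e e0.
have deta : dual_elt eta by case: subz.
have etad : dnorm eta <= d + e.
  by apply: le_trans (dnorm_sub_le dxi deta) _; rewrite lerD2l ltW.
apply: le_trans (subgradient_lower_bound y fxbar_min fxbar subz); rewrite lee_fin.
have gain : xi (y - xbar) - e * n <= eta (y - xbar).
  have := ler_norm (xi (y - xbar) - eta (y - xbar)).
  have := dual_normr_le (y - xbar) (dual_elt_sub dxi deta).
  have := ler_wpM2r (normr_ge0 (y - xbar)) (ltW close).
  rewrite -/n; lra.
have loss : dnorm eta * `|z - xbar| <= (d + e) * (kappa * (d + e) `^ s).
  apply: ler_pM => //; first exact: dnorm_ge0.
  apply: le_trans zclose _; apply: ler_wpM2l => //.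
  apply: ge0_ler_powR => //; rewrite ?nnegrE; first exact: ltW.
    exact: dnorm_ge0.
  by rewrite addr_ge0 // ltW.
rewrite /g; lra.
Qed.

Lemma dense_localized_lower_bound (beta : \bar R) (W : set (X -> R)) x t :
  dense_in W (dball0 beta) -> W `<=` localized_subgradients ->
  0 <= t -> (t%:E <= beta)%E -> kappa * t `^ s <= `|x - xbar| / 2 ->
  ((b + t * `|x - xbar| / 2)%:E <= f x)%E.
Proof.
move=> [_ Wdense] Wloc t0 tbeta tclose.
have [->|xn] := eqVneq x xbar; first by rewrite subrr normr0 mulr0 mul0r addr0 -fxbar.
have /exists_norming_functional[xi0 [dxi0 xi0x xi0le]] : x - xbar != 0.
  by rewrite subr_eq0.
pose xi y := t * xi0 y.
have dxi : dual_elt xi := dual_elt_scale t dxi0.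
have xi_le : dnorm xi <= t.
  apply: dnorm_le => // y y1; rewrite /xi normrM ger0_norm //.
  by rewrite -[leRHS]mulr1 ler_wpM2l // (le_trans (xi0le y)).
have : dclosure localized_subgradients xi.
  apply: dclosure_subset Wloc _ _; apply: Wdense; split => //.
  by apply: le_trans tbeta; rewrite lee_fin.
move=> /(dclosure_localized_lower_bound x); apply: le_trans; rewrite lee_fin.
have : dnorm xi * dnorm xi `^ s <= t * t `^ s.
  apply: ler_pM; rewrite ?powR_ge0 ?dnorm_ge0 //.
  by apply: ge0_ler_powR; rewrite ?nnegrE ?dnorm_ge0 // ltW.
move=> /(ler_wpM2l kappa_ge0); rewrite /xi xi0x; set r := `|x - xbar| in tclose *.
have := ler_wpM2l t0 tclose; lra.
Qed.

Lemma subregular_subgradients_localized (alpha : \bar R) :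
  subdiff_strongly_subregular f xbar s alpha kappa ->
  subdiff_set f (cball xbar alpha) `<=` localized_subgradients.
Proof.
move=> [_ subreg] eta [z zB subz]; exists z; split => //.
have deta : dual_elt eta by case: subz.
have dist_le : (dist0_subdiff f z <= (dnorm eta)%:E)%E.
  by apply: ereal_inf_lbound; exists eta.
have dist_ge0 : (0 <= dist0_subdiff f z)%E.
  by apply: le_ereal_inf_tmp => _ [xi [dxi _] <-]; rewrite lee_fin dnorm_ge0.
rewrite -lee_fin EFinM; apply: le_trans (subreg z zB) _.
apply: lee_wpmul2l; first by rewrite lee_fin.
rewrite -poweR_EFin; apply: gt0_ler_poweR => //; first exact: ltW.
  by rewrite in_itv /= dist_ge0 leey.
by rewrite in_itv /= lee_fin dnorm_ge0 // leey.
Qed.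

End ApproximateSubgradients.

Section ConjugateExponents.
Variables (R : realType) (p q : R).
Hypotheses (p_gt0 : 0 < p) (q_gt0 : 0 < q) (pq : p^-1 + q^-1 = 1).

Lemma conjugate_exponent_div : p / q = p - 1.
Proof.
have -> : q^-1 = 1 - p^-1 by rewrite -pq addrC addKr.
by rewrite mulrBr mulr1 mulfV ?gt_eqF.
Qed.

Lemma conjugate_powR r : 0 <= r -> r `^ p = r `^ (p / q) * r.
Proof.
move=> r0; rewrite -{3}(powRr1 r0) -powRD; first by rewrite conjugate_exponent_div subrK.
by rewrite conjugate_exponent_div subrK gt_eqF.
Qed.

Lemma conjugate_powRK r : 0 <= r -> (r `^ (p / q)) `^ (q / p) = r.
Proof.
by move=> r0; rewrite -powRrM (_ : _ * _ = 1) ?powRr1 //; field; rewrite !gt_eqF.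
Qed.

End ConjugateExponents.

Section Growth.
Variables (R : realType) (X : normedModType R).
Variables (f : X -> \bar R) (xbar : X) (b p q : R).
Hypotheses (fxbar_min : subdiff f xbar (fun _ => 0)) (fxbar : f xbar = b%:E).
Hypotheses (p_gt0 : 0 < p) (q_gt0 : 0 < q) (pq : p^-1 + q^-1 = 1).

Let qp_gt0 : 0 < q / p. Proof. exact: divr_gt0. Qed.

Lemma dense_subgradients_growth (beta : \bar R) (kappa : R) (W : set (X -> R))
    (delta : R) x :
  (0 < beta)%E -> 0 < kappa -> dense_in W (dball0 beta) ->
  W `<=` localized_subgradients f xbar kappa (q / p) ->
  0 < delta -> `|x - xbar| <= delta ->
  (b%:E + (2^-1)%:E * Order.min (beta * ((delta `^ (p / q))^-1)%:E)
                                (((2 * kappa) `^ (p / q))^-1)%:E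
        * (`|x - xbar| `^ p)%:E <= f x)%E.
Proof.
move=> beta0 kappa0 dW Wloc delta0 xdelta.
set r := `|x - xbar| in xdelta *; set a := p / q.
have r0 : 0 <= r := normr_ge0 _.
have k2 : 0 < 2 * kappa by rewrite mulr_gt0.
pose T := (r / (2 * kappa)) `^ a.
have Tr : T * r = ((2 * kappa) `^ a)^-1 * r `^ p.
  have Tk : T * (2 * kappa) `^ a = r `^ a.
    rewrite /T -powRM ?divfK ?gt_eqF //; last exact: ltW.
    by rewrite divr_ge0 // ltW.
  by rewrite (conjugate_powR p_gt0 pq r0) -Tk; field; rewrite gt_eqF ?powR_gt0.
have lower t : 0 <= t -> t <= T -> (t%:E <= beta)%E -> ((b + t * r / 2)%:E <= f x)%E.
  move=> t0 tT tbeta.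
  apply: (dense_localized_lower_bound fxbar_min fxbar (ltW kappa0) qp_gt0 dW Wloc t0 tbeta).
  apply: le_trans (_ : kappa * T `^ (q / p) <= _).
    apply: ler_wpM2l; first exact: ltW.
    by apply: ge0_ler_powR; rewrite ?nnegrE ?powR_ge0 // ltW.
  rewrite conjugate_powRK //; last by rewrite divr_ge0 // ltW.
  by have -> : kappa * (r / (2 * kappa)) = r / 2 by field; rewrite gt_eqF.
have T0 : 0 <= T := powR_ge0 _ _.
case: beta beta0 {dW Wloc} lower => [bt| |] // bt0 lower; last first.
  apply: le_trans (lower T T0 (lexx _) (leey _)).
  rewrite gt0_mulye ?lte_fin ?invr_gt0 ?powR_gt0 // minye.
  by rewrite -!EFinM -EFinD lee_fin lerD2l Tr -mulrA; lra.
rewrite lte_fin in bt0; rewrite -EFinM -EFin_min -!EFinM -EFinD.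
set m := Num.min _ _.
have half t : m * r `^ p <= t * r -> 2^-1 * m * r `^ p <= t * r / 2.
  by rewrite -mulrA; lra.
have [btT|Tbt] := leP bt T.
  apply: le_trans (lower bt (ltW bt0) btT (lexx _)); rewrite lee_fin lerD2l half //.
  apply: le_trans (_ : bt / delta `^ a * r `^ p <= _).
    by rewrite ler_wpM2r ?powR_ge0 // ge_min lexx.
  rewrite (conjugate_powR p_gt0 pq r0) mulrA; apply: ler_wpM2r => //.
  rewrite mulrAC ler_pdivrMr ?powR_gt0 // ler_pM2l //.
  apply: ge0_ler_powR; rewrite ?nnegrE ?(ltW delta0) //.
  exact: ltW (divr_gt0 p_gt0 q_gt0).
apply: le_trans (lower T T0 (lexx _) _); last by rewrite lee_fin ltW.
rewrite lee_fin lerD2l half // Tr ler_wpM2r ?powR_ge0 //.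
by rewrite ge_min lexx orbT.
Qed.

Lemma subregular_growth (alpha : \bar R) (kappa : R) x :
  0 < kappa -> subdiff_strongly_subregular f xbar (q / p) alpha kappa ->
  x \in [set xbar + (2 * kappa) *: u | u in
          dualmap_inv p (dclosure (subdiff_set f (cball xbar alpha)))] ->
  ((b + (2 * (2 * kappa) `^ (p / q))^-1 * `|x - xbar| `^ p)%:E <= f x)%E.
Proof.
move=> kappa0 subreg /set_mem[u [xi [dxi [xiu dnxi]] cl] <-].
have k2 : 0 < 2 * kappa by rewrite mulr_gt0.
have u0 : 0 <= `|u| := normr_ge0 u.
have loc : dclosure (localized_subgradients f xbar kappa (q / p)) xi.
  have near_xbar := subregular_subgradients_localized (ltW kappa0) qp_gt0 subreg.
  exact: dclosure_subset near_xbar _ cl.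
have := dclosure_localized_lower_bound fxbar_min fxbar (ltW kappa0) qp_gt0
  (xbar + (2 * kappa) *: u) loc.
apply: le_trans; rewrite lee_fin addrAC subrr add0r (dual_eltZ _ _ dxi) xiu.
rewrite dnxi -(conjugate_exponent_div p_gt0 pq) conjugate_powRK // normrZ gtr0_norm //.
rewrite (powRM _ (ltW k2) u0) (conjugate_powR p_gt0 pq u0).
rewrite (conjugate_powR p_gt0 pq (ltW k2)).
rewrite le_eqVlt; apply/orP; left; apply/eqP.
by field; rewrite gt_eqF ?powR_gt0.
Qed.

End Growth.

Unset Implicit Arguments. Set Strict Implicit. Set Printing Implicit Defensive.

Theorem theorem4p1 (R : realType) (X : normedModType R) (f : X -> \bar R)
    (xbar : X) (p q : R) :
  proper_fun f ->
  subdiff f xbar (fun _ => 0) ->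
  1 < p -> 1 < q -> p^-1 + q^-1 = 1 ->
  (forall (beta : \bar R) (kappa : R) (W : set (X -> R)),
      (0 < beta)%E -> 0 < kappa ->
      dense_in W (@dball0 R X beta) ->
      (forall xi, W xi -> exists x, subdiff f x xi /\
                     `|x - xbar| <= kappa * (dnorm xi) `^ (q / p)) ->
      forall delta : R, 0 < delta ->
      forall x, `|x - xbar| <= delta ->
        (f x >= f xbar + (2^-1)%:E *
           Order.min (beta * ((delta `^ (p / q))^-1)%:E)
                     (((2 * kappa) `^ (p / q))^-1)%:E
           * (`|x - xbar| `^ p)%:E)%E)
  /\
  (forall (alpha : \bar R) (kappa : R),
      (0 < alpha)%E -> 0 < kappa ->
      subdiff_strongly_subregular f xbar (q / p) alpha kappa ->
      forall x, x \in [set xbar + (2 * kappa) *: u | u in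
                  dualmap_inv p (dclosure (subdiff_set f (cball xbar alpha)))] ->
        (f x >= f xbar + ((2 * (2 * kappa) `^ (p / q))^-1 * `|x - xbar| `^ p)%:E)%E).
Proof.
move=> fproper fxbar_min p1 q1 pq.
have [b fxbar] := minimizer_finite fproper fxbar_min.
have p0 : 0 < p := lt_trans ltr01 p1.
have q0 : 0 < q := lt_trans ltr01 q1.
rewrite fxbar; split.
- move=> beta kappa W beta0 kappa0 dW Wloc delta delta0 x xdelta.
  exact: (dense_subgradients_growth fxbar_min fxbar p0 q0 pq beta0 kappa0 dW Wloc
            delta0 xdelta).
- move=> alpha kappa _ kappa0 subreg x ux; rewrite -EFinD.
  exact: (subregular_growth fxbar_min fxbar p0 q0 pq kappa0 subreg ux).
Qed.
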